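(* Let $P$ be a program and let $\sigma$ be a sequence of events such that the Power automaton of $P$ reaches, from its initial state $q_0$ by reading $\sigma$, a final state $q$. Then $q$ is uniquely determined by $\sigma$.
   Context: Programs. Fix a finite set $D$ of values, which also serve as addresses, with $0\in D$, and a finite set $\mathit{Reg}$ of registers taking values in $D$. Expressions are built from constants in $D$, registers, and functions over $D\cup\{\bot\}$ that return $\bot$ iff some argument is $\bot$. Commands are loads $r\leftarrow \mathrm{mem}[e]$, stores $\mathrm{mem}[e]\leftarrow e'$, assignments $r\leftarrow e$, and $\mathrm{assume}(e)$. A thread is a finite automaton whose transitions (instructions) are labeled by commands; a program is a finite sequence of threads with ids $1,\dots,|P|$. Power automaton. A state consists of, for each thread $t$, a runtime state $(F,C,L)$ ($F$ the sequence of fetched instructions, $C$ the set of committed indices, $L$ mapping each index to $\bot$ or to the store read by the load there: an initial store $\mathrm{init}_a$ of value $0$ to $a$, or a pair $(t',i')$), and a storage state $(co,prop)$ ($co$ assigns rational coherence keys to committed stores, initial stores have key $0$; $prop(t,a)$ is the last store to $a$ propagated to $t$, initially $\mathrm{init}_a$); the initial state has nothing fetched. Register values for the $i$-th instruction of thread $t$ come from the latest earlier fetched assignment or load to the register ($0$ if none; a load gives $\bot$ if unsatisfied, $0$ if it read an initial store, else the value of the store read). Address/data dependencies are earlier instructions an address/value depends on via registers; control dependencies are earlier assumes. Transitions: (fetch) append an instruction of $T_t$ continuing from the last fetched one's target state, event $(\mathrm{fetch},t,\text{instr})$; (load from memory) load $i$ with $L[i]=\bot$ and address $a\ne\bot$: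 $L[i]:=prop(t,a)$, event $(\mathrm{load},t,i,a)$; (early read) same event, if the greatest $i'<i$ that is a store with address in $\{a,\bot\}$ has address $a$, known value and is uncommitted: $L[i]:=(t,i')$; (commit) uncommitted $i$ with committed address/data/control dependencies, address and value $\ne\bot$, all earlier instructions with the same or unknown address committed, $L[i]\ne\bot$ for loads, value $\ne0$ for assumes: event $(\mathrm{commit},t,i)$; for a store additionally a fresh key $k$ is set as $co(t,i)$, event $(\mathrm{commit},t,i,k,a)$, immediately followed by propagation to $t$; (propagate) committed store $(t',i')$ to $a$ with $co(prop(t,a))<co(t',i')$: $prop(t,a):=(t',i')$, event $(\mathrm{prop},t,t',i',a)$. Final states: all fetched instructions committed; for loads $i'<i$ of a thread to the same address, $co(L[i'])\le co(L[i])$; for a store $i'$ and later load $i$ of a thread to the same address, $co(t,i')\le co(L[i])$. *)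

From HB Require Import structures.
From mathcomp Require Import all_boot all_order all_algebra.
Set Implicit Arguments. Unset Strict Implicit. Unset Printing Implicit Defensive.
Import Order.TTheory GRing.Theory Num.Theory.
Local Open Scope ring_scope.

Section Power.
(* D : finite set of values/addresses, zero : the value 0 of D, Reg : registers *)
Variables (D : finType) (zero : D) (Reg : finType).

(* Expressions. A function over D u {bot} that returns bot iff some argument is
   bot is the same as a function on D-values extended strictly to bot. *)
Inductive expr : Type :=
| ECst of D
| EReg of Reg
| EApp of (seq D -> D) & seq expr.

Fixpoint evalE (rv : Reg -> option D) (e : expr) : option D :=
  match e with
  | ECst d => Some d
  | EReg r => rv r
  | EApp f args =>
      let fix evs (l : seq expr) : option (seq D) :=
        match l with
        | [::] => Some [::]
        | e :: l' => match evalE rv e, evs l' with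
                     | Some v, Some vs => Some (v :: vs)
                     | _, _ => None end
        end in
      omap f (evs args)
  end.

Fixpoint regsE (e : expr) : seq Reg :=
  match e with
  | ECst _ => [::]
  | EReg r => [:: r]
  | EApp _ args =>
      let fix rs (l : seq expr) : seq Reg :=
        match l with [::] => [::] | e :: l' => regsE e ++ rs l' end in
      rs args
  end.

(* Commands: r <- mem[e], mem[e] <- e', r <- e, assume(e) *)
Inductive cmd : Type :=
| CLoad of Reg & expr
| CStore of expr & expr
| CAssign of Reg & expr
| CAssume of expr.

Record instr : Type := Instr { isrc : nat; icmd : cmd; itgt : nat }.
Record thread : Type := Thread { tinit : nat; ttrans : seq instr }.
Definition program := seq thread.

(* stores: initial store init_a, or the store at index i of thread t *)
Inductive sid : Type := SInit of D | SSt of nat & nat.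

Inductive event : Type :=
| EvFetch of nat & instr
| EvLoad of nat & nat & D
| EvCommit of nat & nat
| EvCommitSt of nat & nat & rat & D      (* (commit, t, i, k, a) *)
| EvProp of nat & nat & nat & D.         (* (prop, t, t', i', a) *)

(* runtime state (F, C, L) of a thread; indices are 0-based *)
Record tstate : Type := TS { tF : seq instr; tC : nat -> bool; tL : nat -> option sid }.
Record state : Type := PSt {
  thr : nat -> tstate;
  co : nat -> nat -> option rat;   (* coherence key of committed store (t,i) *)
  prop : nat -> D -> sid }.

Definition init_state : state :=
  {| thr := fun _ => TS [::] (fun _ => false) (fun _ => None);
     co := fun _ _ => None;
     prop := fun _ a => SInit a |}.

Definition key (s : state) (x : sid) : option rat :=
  match x with SInit _ => Some 0 | SSt t i => co s t i end.
Definition okey (s : state) (o : option sid) : option rat := obind (key s) o.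
Definition klt (x y : option rat) : Prop :=
  match x, y with Some a, Some b => a < b | _, _ => False end.
Definition kle (x y : option rat) : Prop :=
  match x, y with Some a, Some b => a <= b | _, _ => False end.

Definition writes (r : Reg) (c : cmd) : bool :=
  match c with CLoad r' _ | CAssign r' _ => r' == r | _ => false end.
Definition is_mem (c : cmd) : bool :=
  match c with CLoad _ _ | CStore _ _ => true | _ => false end.
Definition is_load (c : cmd) : bool := if c is CLoad _ _ then true else false.
Definition is_store (c : cmd) : bool := if c is CStore _ _ then true else false.
Definition is_assume (c : cmd) : bool := if c is CAssume _ then true else false.

Definition cmd_at (s : state) (t i : nat) : option cmd :=
  omap icmd (onth (tF (thr s t)) i).

Definition last_before (s : state) (t i : nat) (p : cmd -> bool) : option nat :=
  ohead (rev [seq j <- iota 0 i | if cmd_at s t j is Some c then p c else false]).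

Fixpoint regval (n : nat) (s : state) (t i : nat) (r : Reg) {struct n} : option D :=
  match n with
  | 0 => None
  | n'.+1 =>
    match last_before s t i (writes r) with
    | None => Some zero
    | Some j =>
      match cmd_at s t j with
      | Some (CAssign _ e) => evalE (regval n' s t j) e
      | Some (CLoad _ _) =>
          match tL (thr s t) j with
          | None => None
          | Some (SInit _) => Some zero
          | Some (SSt t' i') =>
              match cmd_at s t' i' with
              | Some (CStore _ e') => evalE (regval n' s t' i') e'
              | _ => None end
          end
      | _ => None
      end
    end
  end.

Variable P : program.

Definition thread_of (t : nat) : thread := nth (Thread 0 [::]) P t.-1.
Definition valid_tid (t : nat) : bool := (0 < t <= size P)%N.

(* enough fuel: one more than the total number of fetched instructions *)
Definition fuel (s : state) : nat :=
  (sumn [seq size (tF (thr s t)) | t <- iota 1 (size P)]).+1.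

Definition val (s : state) (t i : nat) (e : expr) : option D :=
  evalE (regval (fuel s) s t i) e.

Definition store_val (s : state) (x : sid) : option D :=
  match x with
  | SInit _ => Some zero
  | SSt t' i' => if cmd_at s t' i' is Some (CStore _ e') then val s t' i' e' else None
  end.

(* address of a load/store instruction (None = bot or not a memory instruction) *)
Definition addr (s : state) (t i : nat) : option D :=
  match cmd_at s t i with
  | Some (CLoad _ e) | Some (CStore e _) => val s t i e
  | _ => None end.

Definition ivalue (s : state) (t i : nat) : option D :=
  match cmd_at s t i with
  | Some (CLoad _ _) => if tL (thr s t) i is Some x then store_val s x else None
  | Some (CStore _ e) | Some (CAssign _ e) | Some (CAssume e) => val s t i e
  | None => None end.

Definition addr_regs (c : cmd) : seq Reg :=
  match c with CLoad _ e | CStore e _ => regsE e | _ => [::] end.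
Definition data_regs (c : cmd) : seq Reg :=
  match c with CStore _ e | CAssign _ e | CAssume e => regsE e | _ => [::] end.

Definition deps_committed (s : state) (t i : nat) (c : cmd) : Prop :=
  (forall r j, r \in addr_regs c ++ data_regs c ->
     last_before s t i (writes r) = Some j -> tC (thr s t) j) /\
  (forall j c', (j < i)%N -> cmd_at s t j = Some c' -> is_assume c' -> tC (thr s t) j).

Definition can_commit (s : state) (t i : nat) (c : cmd) : Prop :=
  cmd_at s t i = Some c /\ ~~ tC (thr s t) i /\ deps_committed s t i c /\
  (is_mem c -> addr s t i <> None) /\ ivalue s t i <> None /\
  (is_mem c -> forall j c', (j < i)%N -> cmd_at s t j = Some c' -> is_mem c' ->
      addr s t j = addr s t i \/ addr s t j = None -> tC (thr s t) j) /\
  (is_load c -> tL (thr s t) i <> None) /\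
  (is_assume c -> ivalue s t i <> Some zero).

Definition upd_thr (s : state) (t : nat) (f : tstate -> tstate) : state :=
  {| thr := fun t' => if t' == t then f (thr s t) else thr s t';
     co := co s; prop := prop s |}.

Definition set_L (s : state) (t i : nat) (x : sid) : state :=
  upd_thr s t (fun ts => TS (tF ts) (tC ts)
                            (fun j => if j == i then Some x else tL ts j)).
Definition set_C (s : state) (t i : nat) : state :=
  upd_thr s t (fun ts => TS (tF ts) (fun j => if j == i then true else tC ts j) (tL ts)).
Definition set_prop (s : state) (t : nat) (a : D) (x : sid) : state :=
  {| thr := thr s; co := co s;
     prop := fun t' a' => if (t' == t) && (a' == a) then x else prop s t' a' |}.
Definition set_co (s : state) (t i : nat) (k : rat) : state :=
  {| thr := thr s; prop := prop s;
     co := fun t' i' => if (t' == t) && (i' == i) then Some k else co s t' i' |}.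

Definition cur_ctrl (s : state) (t : nat) : nat :=
  match rev (tF (thr s t)) with
  | [::] => tinit (thread_of t)
  | ins :: _ => itgt ins end.

Inductive step : state -> event -> state -> Prop :=
| StFetch s t ins :
    valid_tid t -> (exists n, onth (ttrans (thread_of t)) n = Some ins) -> isrc ins = cur_ctrl s t ->
    step s (EvFetch t ins)
      (upd_thr s t (fun ts => TS (rcons (tF ts) ins) (tC ts) (tL ts)))
| StLoadMem s t i a c :
    cmd_at s t i = Some c -> is_load c -> tL (thr s t) i = None -> addr s t i = Some a ->
    step s (EvLoad t i a) (set_L s t i (prop s t a))
| StEarlyRead s t i a c j c' :
    cmd_at s t i = Some c -> is_load c -> tL (thr s t) i = None -> addr s t i = Some a ->
    (j < i)%N -> cmd_at s t j = Some c' -> is_store c' -> addr s t j = Some a ->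
    ivalue s t j <> None -> ~~ tC (thr s t) j ->
    (forall j' c'', (j < j' < i)%N -> cmd_at s t j' = Some c'' -> is_store c'' ->
       addr s t j' <> Some a /\ addr s t j' <> None) ->
    step s (EvLoad t i a) (set_L s t i (SSt t j))
| StCommit s t i c :
    can_commit s t i c -> ~~ is_store c ->
    step s (EvCommit t i) (set_C s t i)
| StCommitStore s t i c k a :
    can_commit s t i c -> is_store c -> addr s t i = Some a ->
    (* fresh key: not the key 0 of initial stores, not used by a committed store *)
    k != 0 -> (forall t' i', co s t' i' <> Some k) ->
    (* immediately followed by propagation to t *)
    klt (key s (prop s t a)) (Some k) ->
    step s (EvCommitSt t i k a)
      (set_prop (set_co (set_C s t i) t i k) t a (SSt t i))
| StProp s t t' i' a c :
    valid_tid t -> cmd_at s t' i' = Some c -> is_store c -> tC (thr s t') i' ->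
    addr s t' i' = Some a -> klt (key s (prop s t a)) (co s t' i') ->
    step s (EvProp t t' i' a) (set_prop s t a (SSt t' i')).

Inductive reach : state -> seq event -> state -> Prop :=
| Reach0 s : reach s [::] s
| ReachS s e s' sg s'' : step s e s' -> reach s' sg s'' -> reach s (e :: sg) s''.

Definition final (s : state) : Prop :=
  forall t,
  [/\ (forall i, (i < size (tF (thr s t)))%N -> tC (thr s t) i),
      (forall i' i c' c a, (i' < i)%N -> cmd_at s t i' = Some c' -> is_load c' ->
          cmd_at s t i = Some c -> is_load c -> addr s t i' = Some a -> addr s t i = Some a ->
          kle (okey s (tL (thr s t) i')) (okey s (tL (thr s t) i))) &
      (forall i' i c' c a, (i' < i)%N -> cmd_at s t i' = Some c' -> is_store c' ->
          cmd_at s t i = Some c -> is_load c -> addr s t i' = Some a -> addr s t i = Some a ->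
          kle (co s t i') (okey s (tL (thr s t) i)))].

End Power.

From mathcomp Require Import all_boot all_order all_algebra.
Set Implicit Arguments. Unset Strict Implicit. Unset Printing Implicit Defensive.
Import Order.TTheory GRing.Theory Num.Theory.

(* Once the event is fixed, a step of the Power automaton is determined by the state,
   except for a load, which may read from memory or early-read from the latest earlier
   store to the same address; that store is unique.  If the load reads from memory
   while this store j is still uncommitted, no final state is reachable any more: the
   key z of the store read is at most the key of the thread's view of the address,
   views only move forward along coherence, and j is committed with a key above the
   view at that time, hence above z, violating co(t,j) <= co(L[i]) in a final state.
   So two runs reading the same events and ending in final states take the same steps. *)

Section Expressions.
Variables (D Reg : finType).
Notation expr := (expr D Reg).

Definition expr_nested_ind (Q : expr -> Prop) (QC : forall d, Q (ECst Reg d))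
    (QR : forall r, Q (EReg D r))
    (QA : forall h args, foldr (fun e acc => Q e /\ acc) True args -> Q (EApp h args)) :
  forall e, Q e :=
  fix F e := match e with
  | ECst d => QC d
  | EReg r => QR r
  | EApp h args => QA h args
      ((fix G l : foldr (fun e acc => Q e /\ acc) True l :=
          if l is e :: l' then conj (F e) (G l') else I) args)
  end.

Fixpoint seq_opt (l : seq (option D)) : option (seq D) :=
  if l is o :: l' then
    if (o, seq_opt l') is (Some v, Some vs) then Some (v :: vs) else None
  else Some [::].

Lemma evalE_App (rv : Reg -> option D) h args :
  evalE rv (EApp h args) = omap h (seq_opt (map (evalE rv) args)).
Proof. by rewrite /=; congr (omap h _); elim: args => //= e l ->. Qed.

Lemma evalE_mono (f g : Reg -> option D) :
  (forall r v, f r = Some v -> g r = Some v) ->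
  forall e v, evalE f e = Some v -> evalE g e = Some v.
Proof.
move=> fg; elim/expr_nested_ind => [//|r|h args IHargs]; first exact: fg.
rewrite !evalE_App => v.
suff evs_mono vs : seq_opt (map (evalE f) args) = Some vs ->
                   seq_opt (map (evalE g) args) = Some vs.
  by case Ef: seq_opt => [vs|] //; rewrite (evs_mono _ Ef).
elim: args IHargs vs => //= e l IHl [IHe /IHl{}IHl] vs.
case Ee: (evalE f e) => [ve|] //; case El: seq_opt => [vl|] // [<-].
by rewrite (IHe _ Ee) (IHl _ El).
Qed.
End Expressions.

Section PowerAutomaton.
Variables (D : finType) (zero : D) (Reg : finType) (P : program D Reg).
Local Notation state := (state D Reg).
Local Notation addr := (addr zero P).
Local Notation step := (step zero P).
Local Notation reach := (reach zero P).
Local Notation final := (final zero P).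

Lemma cmd_at_lt_size (s : state) t i c :
  cmd_at s t i = Some c -> (i < size (tF (thr s t)))%N.
Proof. by rewrite /cmd_at -onthTE; case: onth. Qed.

Lemma cmd_at_total (s : state) t i :
  (i < size (tF (thr s t)))%N -> exists c, cmd_at s t i = Some c.
Proof. by rewrite /cmd_at -onthTE; case: onth => //= ins _; exists (icmd ins). Qed.

Lemma last_before_lt (s : state) t i p j : last_before s t i p = Some j -> (j < i)%N.
Proof.
rewrite /last_before; case E: rev => [|j' l] //= [<-].
by move: (mem_head j' l); rewrite -E mem_rev mem_filter mem_iota => /and3P[].
Qed.

Definition extends (s s' : state) : Prop :=
  [/\ forall t i c, cmd_at s t i = Some c -> cmd_at s' t i = Some c,
      forall t, (size (tF (thr s t)) <= size (tF (thr s' t)))%N,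
      forall t j x, tL (thr s t) j = Some x -> tL (thr s' t) j = Some x,
      forall t j, tC (thr s t) j -> tC (thr s' t) j &
      forall t i k, co s t i = Some k -> co s' t i = Some k].

Section Extension.
Variables s s' : state.
Hypothesis ss' : extends s s'.

Lemma last_before_extends t i p : (i <= size (tF (thr s t)))%N ->
  last_before s t i p = last_before s' t i p.
Proof.
case: ss' => cmd_ss' _ _ _ _ le_i; rewrite /last_before; congr (ohead (rev _)).
apply: eq_in_filter => j; rewrite mem_iota /= => lt_ji.
have [c cj] := cmd_at_total (leq_trans lt_ji le_i).
by rewrite cj (cmd_ss' _ _ _ cj).
Qed.

Lemma regval_extends n m t i r v : (n <= m)%N -> (i <= size (tF (thr s t)))%N ->
  regval zero n s t i r = Some v -> regval zero m s' t i r = Some v.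
Proof.
elim: n m t i r v => [|n IHn] [|m] //= t i r v le_nm le_i.
rewrite -(last_before_extends _ le_i); case lb: last_before => [j|] //.
have lt_ji := last_before_lt lb.
have [c cj] := cmd_at_total (leq_trans lt_ji le_i).
case: ss' => cmd_ss' _ L_ss' _ _; rewrite cj (cmd_ss' _ _ _ cj).
case: c cj => [r' e|e e'|r' e|e] // cj.
- case Lj: (tL _ j) => [[a|t' i']|] //; rewrite (L_ss' _ _ _ Lj) //.
  case ci': (cmd_at s t' i') => [c'|] //; rewrite (cmd_ss' _ _ _ ci').
  case: c' ci' => // e1 e2 ci'.
  apply: evalE_mono => r0 v0; apply: IHn => //.
  exact: ltnW (cmd_at_lt_size ci').
- apply: evalE_mono => r0 v0; apply: IHn => //.
  exact: ltnW (leq_trans lt_ji le_i).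
Qed.

Lemma fuel_extends : (fuel P s <= fuel P s')%N.
Proof.
case: ss' => _ size_ss' _ _ _; rewrite /fuel ltnS.
by elim: (iota 1 (size P)) => //= t l IHl; apply: leq_add.
Qed.

Lemma addr_extends t i a : addr s t i = Some a -> addr s' t i = Some a.
Proof.
case: ss' => cmd_ss' _ _ _ _; rewrite /addr.
case ci: (cmd_at s t i) => [c|] //; rewrite (cmd_ss' _ _ _ ci).
have le_i := ltnW (cmd_at_lt_size ci).
case: c ci => // [r e|e e'] _; apply: evalE_mono => r0 v0;
  by apply: regval_extends => //; apply: fuel_extends.
Qed.

Lemma key_extends x k : key s x = Some k -> key s' x = Some k.
Proof. by case: ss' => _ _ _ _ co_ss'; case: x => //= t i; apply: co_ss'. Qed.

Lemma okey_extends t i k :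
  okey s (tL (thr s t) i) = Some k -> okey s' (tL (thr s' t) i) = Some k.
Proof.
case: ss' => _ _ L_ss' _ _.
by case Li: tL => [x|] //= /key_extends; rewrite (L_ss' _ _ _ Li).
Qed.

End Extension.

Definition wf_state (s : state) : Prop :=
  (forall t i k, co s t i = Some k -> tC (thr s t) i) /\
  (forall t a, key s (prop s t a) <> None).

Lemma wf_init_state : wf_state (init_state D Reg).
Proof. by []. Qed.

Lemma step_extends s e s' : step s e s' -> wf_state s -> extends s s'.
Proof.
case=> {s e s'} [s t ins _ _ _|s t i a c _ _ Li _|s t i a c j c' _ _ Li _ _ _ _ _ _ _ _
  |s t i c _ _|s t i c k a [_ [Ci _]] _ _ _ _ _|s t t' i' a c _ _ _ _ _ _] wf_s;
  split; rewrite /cmd_at //= => t0; case: (t0 =P t) => [->|_] //.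
- move=> i c; rewrite -cats1 onth_cat; case: ifP => //.
  by rewrite -onthTE; case: onth.
- by rewrite size_rcons.
- by move=> j' x /=; case: eqP => [->|//]; rewrite Li.
- by move=> j' x /=; case: eqP => [->|//]; rewrite Li.
- by move=> j /=; case: eqP.
- by move=> j /=; case: eqP.
- by move=> i' k' /=; case: eqP => [->|//] /wf_s.1; rewrite (negbTE Ci).
Qed.

Lemma step_wf s e s' : step s e s' -> wf_state s -> wf_state s'.
Proof.
move=> st wf_s; have ss' := step_extends st wf_s; case: wf_s => co_C prop_key.
have keep_co : (forall t i k, co s' t i = Some k -> co s t i = Some k) ->
               forall t i k, co s' t i = Some k -> tC (thr s' t) i.
  by move=> co_s's t i k /co_s's /co_C; case: ss' => _ _ _ C_ss' _; apply: C_ss'.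
have keep_prop : (forall t a, prop s' t a = prop s t a) ->
                 forall t a, key s' (prop s' t a) <> None.
  move=> prop_s's t a; rewrite prop_s's; move: (prop_key t a).
  by case ka: key => [k|] // _; rewrite (key_extends ss' ka).
case: st ss' keep_co keep_prop co_C prop_key => {s e s'}
  [s t ins _ _ _|s t i a c _ _ _ _|s t i a c j c' _ _ _ _ _ _ _ _ _ _ _|s t i c _ _
  |s t i c k a _ _ _ _ _ _|s t t' i' a c _ _ _ _ _ key_lt]
  ss' keep_co keep_prop co_C prop_key;
  split; first [by apply: keep_co | by apply: keep_prop | idtac].
- move=> t' i' k' /=; case: (t' =P t) => [->|_] /=; last exact: co_C.
  by case: eqP => // _ /co_C.
- move=> t' a' /=; case: ifP => _; first by rewrite /= !eqxx.
  by move: (prop_key t' a'); case: (prop s t' a') => //= t2 i2; case: ifP.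
- move=> t2 a2 /=; case: ifP => _; last exact: prop_key.
  by move: key_lt => /=; case: key => [?|]; case: co.
Qed.

Lemma kle_klt_trans (x y w : option rat) : kle x y -> klt y w -> klt x w.
Proof. by case: x y w => [x|] [y|] [w|] //=; apply: le_lt_trans. Qed.

Lemma klt_kle (x y : option rat) : klt x y -> kle x y.
Proof. by case: x y => [x|] [y|] //=; apply: ltW. Qed.

Lemma prop_key_ge_step s e s' t a z : step s e s' -> wf_state s ->
  kle (Some z) (key s (prop s t a)) -> kle (Some z) (key s' (prop s' t a)).
Proof.
move=> st wf_s; have ss' := step_extends st wf_s.
have same_prop : prop s' t a = prop s t a -> kle (Some z) (key s (prop s t a)) ->
                 kle (Some z) (key s' (prop s' t a)).
  by move=> ->; case kx: key => [k|] //; rewrite (key_extends ss' kx).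
case: st same_prop => {s e s' wf_s ss'}
  [s t' ins _ _ _|s t' i a' c _ _ _ _|s t' i a' c j c' _ _ _ _ _ _ _ _ _ _ _|s t' i c _ _
  |s t' i c k a' _ _ _ _ _ key_lt|s t' t2 i2 a' c _ _ _ _ _ key_lt] same_prop;
  try exact: same_prop.
all: case: (boolP ((t == t') && (a == a'))) => [/andP[/eqP-> /eqP->]|ne];
  last by apply: same_prop; rewrite /= (negbTE ne).
all: by move/kle_klt_trans/(_ key_lt)/klt_kle; rewrite /= !eqxx /= ?eqxx.
Qed.

Definition accesses (p : cmd D Reg -> bool) (s : state) t i a : Prop :=
  (exists2 c, cmd_at s t i = Some c & p c) /\ addr s t i = Some a.

Lemma accesses_extends p s s' t i a :
  extends s s' -> accesses p s t i a -> accesses p s' t i a.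
Proof.
move=> ss' [[c ci pc] ai]; split; last exact: addr_extends ai.
by exists c => //; case: ss' => cmd_ss' _ _ _ _; apply: cmd_ss'.
Qed.

Definition store_after (s : state) t j a z : Prop :=
  (~~ tC (thr s t) j /\ kle (Some z) (key s (prop s t a))) \/
  exists2 k, co s t j = Some k & (z < k)%R.

Lemma store_after_step s e s' t j a z : step s e s' -> wf_state s ->
  accesses (@is_store D Reg) s t j a -> store_after s t j a z -> store_after s' t j a z.
Proof.
move=> st wf_s [[c cj store_c] aj] [[Cj z_le]|[k cok lt_zk]]; last first.
  by right; exists k => //; case: (step_extends st wf_s) => _ _ _ _; apply.
case C'j: (tC (thr s' t) j); last first.
  by left; split; [rewrite C'j | exact: prop_key_ge_step st wf_s z_le].
right; move: C'j Cj cj store_c aj z_le; case: st => {s e s' wf_s}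
  [s t' ins _ _ _|s t' i a' c' _ _ _ _|s t' i a' c' j' c'' _ _ _ _ _ _ _ _ _ _ _
  |s t' i c' [ci _] not_store|s t' i c' k a' [ci _] _ ai _ _ key_lt
  |s t' t2 i2 a' c' _ _ _ _ _ _] /=; try by move=> ->.
all: try by case: eqP => [->|_] /= ->.
all: case: (t =P t') => [->|_] /=; last by move=> ->.
all: case: (j =P i) => [->|_]; last by move=> ->.
- by move=> _ _; rewrite ci => -[<-]; rewrite (negbTE not_store).
- move=> _ _ _ _; rewrite ai => -[<-] z_le.
  by exists k => //; exact: (@kle_klt_trans (Some z) _ (Some k) z_le key_lt).
Qed.

Definition stale_read (s : state) t i j a z : Prop :=
  [/\ (j < i)%N, accesses (@is_load D Reg) s t i a, accesses (@is_store D Reg) s t j a,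
      okey s (tL (thr s t) i) = Some z & store_after s t j a z].

Lemma stale_read_step s e s' t i j a z : step s e s' -> wf_state s ->
  stale_read s t i j a z -> stale_read s' t i j a z.
Proof.
move=> st wf_s [lt_ji li sj Li after]; have ss' := step_extends st wf_s.
split=> //; [exact: accesses_extends li | exact: accesses_extends sj
            | exact: okey_extends Li | exact: store_after_step st wf_s sj after].
Qed.

Lemma final_no_stale_read s t i j a z : final s -> ~ stale_read s t i j a z.
Proof.
move=> fin [lt_ji [[c ci load_c] ai] [[c' cj store_c'] aj] Li after].
have [all_C _ store_le_load] := fin t.
case: after => [[Cj _]|[k cok lt_zk]].
  by move: Cj; rewrite all_C // (cmd_at_lt_size cj).
have := store_le_load j i c' c a lt_ji cj store_c' ci load_c aj ai.
by rewrite cok Li /= leNgt lt_zk.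
Qed.

Definition doomed (s : state) : Prop := exists t i j a z, stale_read s t i j a z.

Lemma reach_final_not_doomed s sg q :
  reach s sg q -> wf_state s -> final q -> ~ doomed s.
Proof.
elim=> {s sg q} [s _ fin [t [i [j [a [z]]]]]|s e s' sg q st _ IH wf_s fin].
  exact: final_no_stale_read.
move=> [t [i [j [a [z stale]]]]].
apply: IH (step_wf st wf_s) fin _; exists t, i, j, a, z.
exact: stale_read_step st wf_s stale.
Qed.

Definition early_read_source (s : state) t i a j : Prop :=
  [/\ (j < i)%N, accesses (@is_store D Reg) s t j a, ~~ tC (thr s t) j &
      forall j' c, (j < j' < i)%N -> cmd_at s t j' = Some c -> is_store c ->
        addr s t j' <> Some a].

Lemma early_read_source_unique s t i a j1 j2 :
  early_read_source s t i a j1 -> early_read_source s t i a j2 -> j1 = j2.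
Proof.
move=> [lt1 [[c1 c1j st1] a1] _ max1] [lt2 [[c2 c2j st2] a2] _ max2].
case: (ltngtP j1 j2) => // [lt12|lt21].
- by case: (max1 j2 c2) => //; rewrite lt12.
- by case: (max2 j1 c1) => //; rewrite lt21.
Qed.

Lemma load_step_inv s t i a s' : step s (@EvLoad D Reg t i a) s' ->
  accesses (@is_load D Reg) s t i a /\
  (s' = set_L s t i (prop s t a) \/
   exists2 j, early_read_source s t i a j & s' = set_L s t i (SSt D t j)).
Proof.
move e_ev: (@EvLoad D Reg t i a) => ev st; case: st e_ev => //.
- by move=> s0 t0 i0 a0 c ci load_c _ ai [-> -> ->]; split; [split; first exists c | left].
- move=> s0 t0 i0 a0 c j c' ci load_c _ ai lt_ji cj store_c' aj _ Cj max [-> -> ->].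
  split; first by split; first exists c.
  right; exists j => //; split=> // [|j' c'' lt_j' cj' store_c''].
    by split; first exists c'.
  by case: (max j' c'' lt_j' cj' store_c'').
Qed.

Lemma step_functional_not_load s e s1 s2 : (forall t i a, e <> @EvLoad D Reg t i a) ->
  step s e s1 -> step s e s2 -> s1 = s2.
Proof.
move=> not_load st1; case: st1 not_load => {e s1}
  [s0 t ins _ _ _|s0 t i a c _ _ _ _|s0 t i a c j c' _ _ _ _ _ _ _ _ _ _ _|s0 t i c _ _
  |s0 t i c k a _ _ _ _ _ _|s0 t t' i' a c _ _ _ _ _ _] not_load st2;
  first [by case: (not_load t i a) | by inversion st2].
Qed.

Lemma memory_read_past_early_source_doomed s t i a j :
  wf_state s -> step s (@EvLoad D Reg t i a) (set_L s t i (prop s t a)) ->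
  accesses (@is_load D Reg) s t i a -> early_read_source s t i a j ->
  doomed (set_L s t i (prop s t a)).
Proof.
move=> wf_s st li [lt_ji sj Cj _]; have ss' := step_extends st wf_s.
have [z kz] : exists z, key s (prop s t a) = Some z.
  by case: wf_s => _ /(_ t a); case: key => [z|] // _; exists z.
exists t, i, j, a, z; split=> //.
- exact: accesses_extends li.
- exact: accesses_extends sj.
- by rewrite /= !eqxx /= eqxx /= (key_extends ss' kz).
- by left; rewrite /= eqxx (key_extends ss' kz).
Qed.

Lemma step_deterministic s e s1 s2 : wf_state s ->
  step s e s1 -> step s e s2 -> [\/ s1 = s2, doomed s1 | doomed s2].
Proof.
move=> wf_s.
have [[t [i [a ->]]]|not_load] :
    (exists t i a, e = @EvLoad D Reg t i a) \/ forall t i a, e <> @EvLoad D Reg t i a.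
  by case: e => [t ins|t i a|t i|t i k a|t t' i' a]; [right|left; exists t, i, a|right..].
- move=> st1 st2; have [li [s1E|[j1 src1 s1E]]] := load_step_inv st1;
    have [_ [s2E|[j2 src2 s2E]]] := load_step_inv st2.
  + by constructor 1; rewrite s1E s2E.
  + constructor 2; rewrite s1E.
    by apply: memory_read_past_early_source_doomed src2 => //; rewrite -s1E.
  + constructor 3; rewrite s2E.
    by apply: memory_read_past_early_source_doomed src1 => //; rewrite -s2E.
  + by constructor 1; rewrite s1E s2E (early_read_source_unique src1 src2).
- by move=> st1 st2; constructor 1; apply: step_functional_not_load st1 st2.
Qed.

Lemma reach_final_unique s sg q q' : wf_state s ->
  reach s sg q -> final q -> reach s sg q' -> final q' -> q = q'.
Proof.
move=> + r; elim: r q' => {s sg q} [s q' _ _ r'|s e s1 sg q st1 r1 IH q' wf_s fin r'] fin'.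
  by inversion r'.
inversion r' as [|s' e' s2 sg' q'' st2 r2]; subst.
have wf1 := step_wf st1 wf_s.
case: (step_deterministic wf_s st1 st2) => [s12|doom1|doom2].
- by subst; apply: IH wf1 fin r2 fin'.
- by case: (reach_final_not_doomed r1 wf1 fin doom1).
- by case: (reach_final_not_doomed r2 (step_wf st2 wf_s) fin' doom2).
Qed.

End PowerAutomaton.

Theorem lemma1 (D : finType) (zero : D) (Reg : finType) (P : program D Reg)
  (sigma : seq (event D Reg)) (q q' : state D Reg) :
  reach zero P (init_state D Reg) sigma q -> final zero P q ->
  reach zero P (init_state D Reg) sigma q' -> final zero P q' ->
  q = q'.
Proof. exact: reach_final_unique (wf_init_state D Reg). Qed.
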